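(* Let $K\ge3$, $L\in\{3,\dots,K\}$, and $p_1>p_2\ge\cdots\ge p_K>0$ with $\sum_kp_k=1$. Let $n_1\ge n_2\ge\cdots\ge n_{L-1}\ge1$ and $n$ be integers with $0\le n-\sum_{t=1}^{L-1}n_t\le (K-L+1)\,n_{L-1}$. For every tuple $(i_1,\dots,i_{L-1})$ of distinct indices in $\{1,\dots,K\}$, let $I=\{i_1,\dots,i_{L-1}\}$, $\bar n=n-\sum_{t=1}^{L-1}n_t$, $$S_{i_1,\dots,i_{L-1}}:=\sum_{\mathbf r}\frac{\bar n!}{\prod_{j\notin I}r_j!}\prod_{j\notin I}p_j^{r_j},$$ the sum over $\mathbf r=(r_j)_{j\notin I}$ of nonnegative integers with $\sum_{j\notin I}r_j=\bar n$ and $\max_{j\notin I}r_j\le n_{L-1}$, and $A_{i_1,\dots,i_{L-1}}:=S_{i_1,\dots,i_{L-1}}\prod_{t=1}^{L-1}p_{i_t}^{n_t}$. Then $$\max_{i_2,\dots,i_{L-1}}A_{1,i_2,\dots,i_{L-1}}=A_{1,2,\dots,L-1},\qquad \max_{i_1\ne1}A_{i_1,i_2,\dots,i_{L-1}}=A_{2,1,3,\dots,L-1},$$ where the maxima are over tuples of distinct indices (the first with $i_1=1$ fixed, the second over all tuples with $i_1\ne1$).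
   Context: $n_1,\dots,n_{L-1}$ play the role of the $L-1$ largest occurrence counts among $n$ i.i.d. samples from $(p_1,\dots,p_K)$, so the remaining $\bar n$ samples fall on the other answers each at most $n_{L-1}$ times. *)

(* Indices are 0-based: answer k in the paper is the ordinal
   of value k-1 in 'I_K; position t in the tuple (1..L-1) is value t-1. *)
From HB Require Import structures.
From mathcomp Require Import all_boot all_order all_algebra.
Set Implicit Arguments. Unset Strict Implicit. Unset Printing Implicit Defensive.
Import Order.TTheory GRing.Theory Num.Theory.
Local Open Scope ring_scope.

Section Defs.
Variables (R : realFieldType) (K L : nat) (p : 'I_K -> R) (nn : nat -> nat) (n : nat).

Definition nlast : nat := nn (L.-2).

Definition nbar : nat := (n - \sum_(t < L.-1) nn t)%N.

Definition idxset (i : 'I_(L.-1) -> 'I_K) : {set 'I_K} := [set i t | t in 'I_(L.-1)].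

(* S_{i}: sum over r = (r_j)_{j notin I}, 0 <= r_j <= n_{L-1}, sum r_j = nbar.
   The vector r is encoded as a function on all of 'I_K vanishing on I. *)
Definition Ssum (i : 'I_(L.-1) -> 'I_K) : R :=
  \sum_(r : {ffun 'I_K -> 'I_(nlast.+1)} |
          [forall j, (j \in idxset i) ==> (val (r j) == 0%N)] &&
          ((\sum_(j | j \notin idxset i) val (r j))%N == nbar))
     ((nbar`!)%:R / \prod_(j | j \notin idxset i) ((val (r j))`!)%:R)
       * \prod_(j | j \notin idxset i) p j ^+ val (r j).

Definition Aval (i : 'I_(L.-1) -> 'I_K) : R :=
  Ssum i * \prod_(t < L.-1) p (i t) ^+ nn t.

End Defs.

(* Expanding S, the value A_i is a sum over admissible count vectors r of a
   nonnegative multinomial coefficient times the monomial prod_j p_j^(e_j),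
   where e_j is the occupancy of answer j: r_j off I and n_t at j = i_t.
   Relabelling answers by the transposition (i_t b) maps admissible vectors
   bijectively onto admissible vectors, so replacing i_t by b in the tuple
   only exchanges the exponents of p_(i_t) and p_b in every monomial.  If
   p_(i_t) <= p_b and b does not occur before position t, the occupancy of b
   is r_b <= n_(L-1) <= n_t or n_u <= n_t for some u > t, so no term
   decreases.  Filling the positions left to right with the most likely
   remaining answer therefore never decreases A, which gives both maxima. *)

From HB Require Import structures.
From mathcomp Require Import all_boot perm all_order all_algebra.
From mathcomp Require Import zify.
Set Implicit Arguments.
Unset Strict Implicit.
Unset Printing Implicit Defensive.

Import Order.TTheory GRing.Theory Num.Theory.
Local Open Scope ring_scope.

Lemma ler_swap_exprs (R : numDomainType) (x y : R) (r m : nat) :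
  0 <= x -> x <= y -> (r <= m)%N -> y ^+ r * x ^+ m <= x ^+ r * y ^+ m.
Proof.
move=> x0 xy rm; have y0 : 0 <= y := le_trans x0 xy.
rewrite -(subnK rm) !exprD [x ^+ (m - r) * _]mulrC [y ^+ (m - r) * _]mulrC.
rewrite !mulrA [y ^+ r * _]mulrC.
by apply: ler_wpM2l; [rewrite mulr_ge0 ?exprn_ge0 | rewrite lerXn2r ?nnegrE].
Qed.

Lemma prod_tperm_ge (R : numDomainType) (T : finType) (p : T -> R) (e : T -> nat)
    (a b : T) :
  (forall j, 0 <= p j) -> p a <= p b -> (e b <= e a)%N ->
  \prod_j p j ^+ e j <= \prod_j p (tperm a b j) ^+ e j.
Proof.
move=> p_ge0 pab eba; have [<-|ab] := eqVneq a b.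
  by under [X in _ <= X]eq_bigr do rewrite tperm1 perm1.
have split_ab (F : T -> R) :
    \prod_j F j = F a * F b * \prod_(j | (j != a) && (j != b)) F j.
  rewrite (bigD1 a) // (bigD1 b) 1?eq_sym //= mulrA.
  by congr (_ * _); apply: eq_bigl => j; rewrite andbC.
rewrite !split_ab tpermL tpermR.
have -> : \prod_(j | (j != a) && (j != b)) p (tperm a b j) ^+ e j
        = \prod_(j | (j != a) && (j != b)) p j ^+ e j.
  by apply: eq_bigr => j /andP[ja jb]; rewrite tpermD // eq_sym.
apply: ler_wpM2r; first by rewrite prodr_ge0 // => j _; rewrite exprn_ge0.
by rewrite mulrC [X in _ <= X]mulrC ler_swap_exprs.
Qed.

Section Exchange.
Variables (R : realFieldType) (K L : nat) (nn : nat -> nat) (n : nat).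
Hypothesis nn_antitone :
  forall s t : nat, (s <= t)%N -> (t < L.-1)%N -> (nn t <= nn s)%N.

Local Notation counts := {ffun 'I_K -> 'I_(nlast L nn).+1}.
Implicit Types (p : 'I_K -> R) (i g : 'I_L.-1 -> 'I_K) (r : counts).

Definition admissible i r : bool :=
  [forall j, (j \in idxset i) ==> (val (r j) == 0%N)] &&
  ((\sum_(j | j \notin idxset i) val (r j))%N == nbar L nn n).

Definition multinomial_coef i r : R :=
  (nbar L nn n)`!%:R / \prod_(j | j \notin idxset i) ((val (r j))`!)%:R.

Definition occupancy i r (j : 'I_K) : nat := r j + \sum_(t | i t == j) nn t.

Lemma SsumE p i :
  Ssum p nn n i =
  \sum_(r | admissible i r)
     multinomial_coef i r * \prod_(j | j \notin idxset i) p j ^+ r j.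
Proof. by []. Qed.

Lemma mem_idxset i t : i t \in idxset i.
Proof. by apply/imsetP; exists t. Qed.

Lemma eq_Aval p i g : i =1 g -> Aval p nn n i = Aval p nn n g.
Proof.
move=> eq_ig; rewrite /Aval /Ssum.
have -> : idxset g = idxset i by apply: eq_imset => t; rewrite eq_ig.
by congr (_ * _); apply: eq_bigr => t _; rewrite eq_ig.
Qed.

Lemma mem_idxset_perm (s : {perm 'I_K}) i j :
  (s j \in idxset (fun t => s (i t))) = (j \in idxset i).
Proof.
by apply/imsetP/imsetP => [[t _ /perm_inj ->]|[t _ ->]]; exists t.
Qed.

Lemma big_notin_idxset_perm (T : Type) (idx : T) (op : Monoid.com_law idx)
    (s : {perm 'I_K}) i (F : 'I_K -> T) :
  \big[op/idx]_(j | j \notin idxset (fun t => s (i t))) F j =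
  \big[op/idx]_(j | j \notin idxset i) F (s j).
Proof.
by rewrite (reindex_inj (@perm_inj _ s)); apply: eq_bigl => j; rewrite mem_idxset_perm.
Qed.

Lemma Ssum_relabel p (s : {perm 'I_K}) i :
  Ssum p nn n (fun t => s (i t)) = Ssum (fun j => p (s j)) nn n i.
Proof.
pose relabel r : counts := [ffun j => r ((s^-1)%g j)].
have relabel_inj : injective relabel.
  by move=> r1 r2 /ffunP eq_r; apply/ffunP => j; have := eq_r (s j); rewrite !ffunE permK.
rewrite !SsumE (reindex_inj relabel_inj).
apply: eq_big => r.
  rewrite /admissible big_notin_idxset_perm; congr andb.
    apply/forallP/forallP => r0 j.
      by have := r0 (s j); rewrite mem_idxset_perm ffunE permK.
    by rewrite -{1}(permKV s j) mem_idxset_perm ffunE; apply: r0.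
  by congr (_ == _); apply: eq_bigr => j _; rewrite ffunE permK.
move=> _; rewrite /multinomial_coef !big_notin_idxset_perm.
by congr (_ / _ * _); apply: eq_bigr => j _; rewrite ffunE permK.
Qed.

Lemma Aval_relabel p (s : {perm 'I_K}) i :
  Aval p nn n (fun t => s (i t)) = Aval (fun j => p (s j)) nn n i.
Proof. by rewrite /Aval Ssum_relabel. Qed.

Lemma prod_occupancy p i r : admissible i r ->
  \prod_(j | j \notin idxset i) p j ^+ r j * \prod_(t < L.-1) p (i t) ^+ nn t =
  \prod_j p j ^+ occupancy i r j.
Proof.
move=> /andP[/forallP r0 _]; under [RHS]eq_bigr do rewrite exprD.
rewrite big_split /=; congr (_ * _).
  rewrite [RHS](bigID (mem (idxset i))) /= [X in _ = X * _]big1 ?mul1r // => j jI.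
  by rewrite (eqP (implyP (r0 j) jI)).
rewrite (partition_big i predT) //; apply: eq_bigr => j _.
by rewrite -prodrXr; apply: eq_big => // t; move/eqP => <-.
Qed.

Lemma AvalE p i :
  Aval p nn n i =
  \sum_(r | admissible i r) multinomial_coef i r * \prod_j p j ^+ occupancy i r j.
Proof.
rewrite /Aval SsumE mulr_suml; apply: eq_bigr => r adm.
by rewrite -mulrA prod_occupancy.
Qed.

Lemma occupancy_notin i r j : j \notin idxset i -> occupancy i r j = r j.
Proof.
move=> jI; rewrite /occupancy big_pred0 ?addn0 // => t.
by apply: contraNF jI => /eqP <-; apply: mem_idxset.
Qed.

Lemma occupancy_idx i r t : injective i -> admissible i r -> occupancy i r (i t) = nn t.
Proof.
move=> i_inj /andP[/forallP r0 _].
rewrite /occupancy (eqP (implyP (r0 _) (mem_idxset i t))) (big_pred1 t) // => u.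
by rewrite /= (inj_eq i_inj).
Qed.

Lemma nlast_le (t : 'I_L.-1) : (nlast L nn <= nn t)%N.
Proof. by have := ltn_ord t; rewrite /nlast => tL; apply: nn_antitone; lia. Qed.

Lemma Aval_le_tperm p i (t : 'I_L.-1) (b : 'I_K) :
  (forall j, 0 <= p j) -> injective i ->
  (forall s : 'I_L.-1, (s < t)%N -> i s != b) -> p (i t) <= p b ->
  Aval p nn n i <= Aval p nn n (fun s => tperm (i t) b (i s)).
Proof.
move=> p_ge0 i_inj b_fresh le_p.
rewrite Aval_relabel !AvalE; apply: ler_sum => r adm.
apply: ler_wpM2l.
  by rewrite divr_ge0 // prodr_ge0 // => j _; apply: ler0n.
apply: prod_tperm_ge => //; rewrite occupancy_idx //.
have [/imsetP[u _ b_def]|bI] := boolP (b \in idxset i); last first.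
  by rewrite occupancy_notin // (leq_trans _ (nlast_le t)) // -ltnS ltn_ord.
rewrite b_def occupancy_idx // nn_antitone // leqNgt.
by apply/negP => ut; have := b_fresh u ut; rewrite b_def eqxx.
Qed.

Lemma Aval_fix_position p g i (t : 'I_L.-1) :
  (forall j, 0 <= p j) -> injective g -> injective i ->
  (forall s : 'I_L.-1, (s < t)%N -> i s = g s) -> p (i t) <= p (g t) ->
  exists i', [/\ injective i', forall s : 'I_L.-1, (s <= t)%N -> i' s = g s
               & Aval p nn n i <= Aval p nn n i'].
Proof.
move=> p_ge0 g_inj i_inj ig le_p.
have t_neq (s : 'I_L.-1) : (s < t)%N -> t != s.
  by move=> st; apply/eqP => ts; rewrite ts ltnn in st.
exists (fun s => tperm (i t) (g t) (i s)); split.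
- by move=> x y /perm_inj /i_inj.
- move=> s; rewrite leq_eqVlt => /orP[/eqP/val_inj -> | st]; first exact: tpermL.
  have ts := t_neq s st.
  rewrite tpermD ?(inj_eq i_inj) //; first exact: ig.
  by rewrite ig // (inj_eq g_inj).
- apply: Aval_le_tperm => // s st.
  by rewrite ig // eq_sym (inj_eq g_inj) t_neq.
Qed.

Lemma Aval_le_greedy p g (k : nat) :
  (forall j, 0 <= p j) -> injective g ->
  (forall t : 'I_L.-1, (k <= t)%N ->
     forall a, (forall s : 'I_L.-1, (s < t)%N -> a != g s) -> p a <= p (g t)) ->
  forall i, injective i -> (forall s : 'I_L.-1, (s < k)%N -> i s = g s) ->
  Aval p nn n i <= Aval p nn n g.
Proof.
move=> p_ge0 g_inj; have [d kd] := ubnP (L.-1 - k)%N.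
elim: d k kd => // d IH k kd g_greedy i i_inj ig.
have [kL|Lk] := ltnP k L.-1; last first.
  by rewrite (@eq_Aval p i g) // => s; apply/ig/(leq_trans (ltn_ord s)).
pose t := Ordinal kL.
have le_p : p (i t) <= p (g t).
  apply: g_greedy => // s st; rewrite -ig //.
  by rewrite (inj_eq i_inj); apply/eqP => ts; rewrite ts ltnn in st.
have [i' [i'_inj i'g le_i']] := @Aval_fix_position p g i t p_ge0 g_inj i_inj ig le_p.
apply: le_trans le_i' (IH k.+1 _ _ _ i'_inj i'g); first by lia.
by move=> u ku; apply: g_greedy; apply: ltnW.
Qed.

End Exchange.

Lemma le_fresh_of_cover (R : realFieldType) (K L : nat) (p : 'I_K -> R)
    (g : 'I_L.-1 -> 'I_K) (t : 'I_L.-1) :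
  (forall i j : 'I_K, (val i <= val j)%N -> p j <= p i) ->
  (forall x : 'I_K, (x < g t)%N -> exists2 s : 'I_L.-1, (s < t)%N & g s = x) ->
  forall a, (forall s : 'I_L.-1, (s < t)%N -> a != g s) -> p a <= p (g t).
Proof.
move=> p_antitone g_cover a a_fresh; apply: p_antitone; rewrite leqNgt.
by apply/negP => /g_cover[s st gs]; have := a_fresh s st; rewrite gs eqxx.
Qed.

Definition swap01 (m : nat) : nat :=
  if m == 0%N then 1%N else if m == 1%N then 0%N else m.

Lemma swap01K : involutive swap01.
Proof. by case=> [|[|m]]. Qed.

Lemma swap01_id m : (1 < m)%N -> swap01 m = m.
Proof. by case: m => [|[|m]]. Qed.

Lemma swap01_lt m N : (1 < N)%N -> (m < N)%N -> (swap01 m < N)%N.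
Proof. by case: m => [|[|m]] // N1 _; apply: ltnW. Qed.

Theorem lemma2 (R : realFieldType) (K L : nat) (p : 'I_K -> R)
    (nn : nat -> nat) (n : nat) :
  (3 <= K)%N -> (3 <= L)%N -> (L <= K)%N ->
  (* p_1 > p_2 >= ... >= p_K > 0, sum = 1 *)
  (forall i j : 'I_K, val i = 0%N -> val j = 1%N -> p j < p i) ->
  (forall i j : 'I_K, (val i <= val j)%N -> p j <= p i) ->
  (forall j : 'I_K, 0 < p j) ->
  \sum_(j < K) p j = 1 ->
  (* n_1 >= ... >= n_{L-1} >= 1 *)
  (forall s t : nat, (s <= t)%N -> (t < L.-1)%N -> (nn t <= nn s)%N) ->
  (1 <= nn L.-2)%N ->
  (* 0 <= n - sum n_t <= (K-L+1) n_{L-1} *)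
  (\sum_(t < L.-1) nn t <= n)%N ->
  (n - \sum_(t < L.-1) nn t <= (K - L + 1) * nn L.-2)%N ->
  (* i0 = (1,2,...,L-1) and i1 = (2,1,3,...,L-1) in 1-based notation *)
  forall i0 i1 : 'I_L.-1 -> 'I_K,
  (forall t, val (i0 t) = val t) ->
  (forall t, val (i1 t) = (if val t == 0%N then 1 else if val t == 1%N then 0 else val t)%N) ->
  (forall i : 'I_L.-1 -> 'I_K, injective i ->
     (forall t, val t = 0%N -> val (i t) = 0%N) ->
     Aval p nn n i <= Aval p nn n i0) /\
  (forall i : 'I_L.-1 -> 'I_K, injective i ->
     (forall t, val t = 0%N -> val (i t) <> 0%N) ->
     Aval p nn n i <= Aval p nn n i1).
Proof.
move=> _ L3 _ _ p_antitone p_gt0 _ nn_antitone _ _ _ i0 i1 i0E i1E.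
have p_ge0 j : 0 <= p j by apply: ltW.
have L1 : (1 < L.-1)%N by rewrite -(subnKC L3).
split=> [i i_inj i0_fixed | i i_inj i_moved].
  have i0_inj : injective i0 by move=> x y /(congr1 val); rewrite !i0E => /val_inj.
  apply: (Aval_le_greedy n nn_antitone (k := 1)) => // [t _|s s0].
    apply: le_fresh_of_cover => // x; rewrite i0E => xt.
    by exists (Ordinal (ltn_trans xt (ltn_ord t))) => //; apply/val_inj; rewrite i0E.
  by apply/val_inj; rewrite i0E i0_fixed //; move: s0; rewrite ltnS leqn0 => /eqP.
have {}i1E t : val (i1 t) = swap01 (val t) := i1E t.
have i1_inj : injective i1.
  by move=> x y /(congr1 val); rewrite !i1E => /(can_inj swap01K) /val_inj.
pose t0 : 'I_L.-1 := Ordinal (ltnW L1).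
pose t1 : 'I_L.-1 := Ordinal L1.
have [i' [i'_inj i'_fixed le_i']] : exists i', [/\ injective i',
    forall s : 'I_L.-1, (s <= t0)%N -> i' s = i1 s & Aval p nn n i <= Aval p nn n i'].
  apply: (Aval_fix_position n nn_antitone) => //; apply: p_antitone.
  by rewrite i1E lt0n; apply/eqP/i_moved.
have [i'' [i''_inj i''_fixed le_i'']] : exists i'', [/\ injective i'',
    forall s : 'I_L.-1, (s <= t1)%N -> i'' s = i1 s & Aval p nn n i' <= Aval p nn n i''].
  by apply: (Aval_fix_position n nn_antitone) => //; apply: p_antitone; rewrite i1E.
apply: le_trans le_i' (le_trans le_i'' _).
apply: (Aval_le_greedy n nn_antitone (k := 2)) => // t t2.
apply: le_fresh_of_cover => // x; rewrite i1E swap01_id // => xt.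
exists (Ordinal (swap01_lt L1 (ltn_trans xt (ltn_ord t)))); first exact: swap01_lt.
by apply/val_inj; rewrite i1E swap01K.
Qed.
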